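(* Let $\tau\in(0,1]$ and let $\underline{q}^*$ be the optimal lower $\tau$-quantile. Any policy $\pi^*$ such that $F^{\pi^*}(\mathrm{prec}(\underline{q}^* )) = F^*(\mathrm{prec}(\underline{q}^* ))$, where $F^*(w)=\min_\pi F^\pi(w)$, is an optimal policy with regard to the lower $\tau$-quantile criterion.
   Context: An MDP is a tuple $(\mathcal S,\mathcal A,\mathcal P,r,s_0)$ with finite state set, finite action set, transition probabilities $\mathcal P(s,a,s')$, reward function $r:\mathcal S\times\mathcal A\to\mathcal R$, initial state $s_0$, and finite horizon $T$; policies are sequences of $T$ (possibly history-dependent, randomized) decision rules. The wealth of a history is $w(h_0)=w_0$, $w(h_t)=w(h_{t-1})\circ r(s_{t-1},a_{t-1})$ for a binary operation $\circ$ with left identity $w_0$. The set $\mathcal W_T$ of wealth levels of $T$-histories is totally ordered by $\preceq_{\mathcal W}$ with least element $\min(\mathcal W_T)$ and greatest element. For a policy $\pi$, $p^\pi(w)$ is the probability that the generated $T$-history has wealth $w$, and $F^\pi(w)=\sum_{w'\preceq_{\mathcal W}w}p^\pi(w')$. The lower $\tau$-quantile of $\pi$ is $\underline{q}^\pi_\tau=\min\{w\in\mathcal W_T:F^\pi(w)\ge\tau\}$; $\underline{q}^*=\max_\pi\underline{q}^\pi_\tau$, and a policy is optimal for the lower $\tau$-quantile criterion if its lower $\tau$-quantile equals $\underline{q}^*$. For $w\in\mathcal W_T$, $\mathrm{prec}(w)$ is the greatest (w.r.t. $\preceq_{\mathcal W}$) element of $\mathcal W_T$ strictly below $w$, and $\mathrm{prec}(w)=w$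 if no such element exists. *)

From HB Require Import structures.
From mathcomp Require Import all_boot all_order all_algebra.
Set Implicit Arguments. Unset Strict Implicit. Unset Printing Implicit Defensive.
Import Order.TTheory GRing.Theory Num.Theory.
Local Open Scope ring_scope.

Section MDP.
Context {R : realFieldType} {S A : finType} {d : Order.disp_t} {W : orderType d}.

Definition mdp_ok (P : S -> A -> S -> R) : Prop :=
  (forall s a s', 0 <= P s a s') /\ (forall s a, \sum_(s' : S) P s a s' = 1).

(* A history-dependent randomized policy: the decision rule d_t receives the
   history h_t = (s_0,a_0,...,s_{t-1},a_{t-1},s_t), given as the list of past
   (state, action) pairs (of length t) and the current state s_t, and returns
   a probability distribution over actions. *)
Definition policy := seq (S * A) -> S -> A -> R.

Definition policy_ok (pol : policy) : Prop :=
  (forall h s a, 0 <= pol h s a) /\ (forall h s, \sum_(a : A) pol h s a = 1).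

Definition history (T : nat) := (T.-tuple (S * A) * S)%type.

Definition hstate T (h : history T) (i : nat) : S :=
  nth h.2 (map fst h.1 ++ [:: h.2]) i.
Definition haction T (h : history T) (i : 'I_T) : A := (tnth h.1 i).2.

Definition hprob (P : S -> A -> S -> R) (s0 : S) T (pol : policy)
    (h : history T) : R :=
  (hstate h 0 == s0)%:R *
  \prod_(i < T) (pol (take i h.1) (hstate h i) (haction h i)
                 * P (hstate h i) (haction h i) (hstate h i.+1)).

Definition wealth (r : S -> A -> W) (op : W -> W -> W) (w0 : W) T
    (h : history T) : W :=
  foldl (fun w sa => op w (r sa.1 sa.2)) w0 h.1.

Definition WT r op w0 (s0 : S) T : seq W :=
  [seq wealth r op w0 h | h in [pred h : history T | hstate h 0 == s0]].

Definition pmass P r op w0 s0 T pol (w : W) : R :=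
  \sum_(h : history T | wealth r op w0 h == w) hprob P s0 pol h.

Definition cdf P r op w0 s0 T pol (w : W) : R :=
  \sum_(w' <- undup (WT r op w0 s0 T) | (w' <= w)%O) pmass P r op w0 s0 T pol w'.

(* lower tau-quantile: min { w in W_T | F^pi(w) >= tau }
   (the default w0 for an empty set never arises for valid policies) *)
Definition lower_quantile P r op w0 s0 T pol (tau : R) : W :=
  match [seq w <- WT r op w0 s0 T | tau <= cdf P r op w0 s0 T pol w] with
  | [::] => w0
  | x :: s => foldl Order.min x s
  end.

Definition prec r op w0 s0 T (w : W) : W :=
  match [seq x <- WT r op w0 s0 T | (x < w)%O] with
  | [::] => w
  | x :: s => foldl Order.max x s
  end.

End MDP.

From HB Require Import structures.
From mathcomp Require Import all_boot all_order all_algebra.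
Import Order.TTheory GRing.Theory Num.Theory.
Set Implicit Arguments. Unset Strict Implicit. Unset Printing Implicit Defensive.
Local Open Scope ring_scope.

(* Let q be the lower tau-quantile of pistar and suppose q < q*.  Then
   p := prec q* satisfies q <= p < q*, so tau <= F^pistar(q) <= F^pistar(p),
   and minimality of F^pistar at p gives tau <= F^pi(p) for a policy pi
   attaining q*; hence the lower tau-quantile of pi is at most p < q*, a
   contradiction.  The only probabilistic input is that the T-histories carry
   total mass 1, so that F^pi reaches 1 >= tau on W_T and every lower
   quantile is a minimum over a nonempty set. *)

Section FoldlExtremum.
Variables (T : eqType) (op : T -> T -> T) (e : rel T).
Hypothesis op_sel : forall x y, op x y = x \/ op x y = y.
Hypothesis e_refl : reflexive e.
Hypothesis e_trans : forall x y z, e x y -> e y z -> e x z.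
Hypothesis e_op : forall x y, e (op x y) x && e (op x y) y.

Lemma mem_foldl_sel x s : foldl op x s \in x :: s.
Proof.
elim: s x => [|y s IHs] x /=; first exact: mem_head.
have := IHs (op x y); rewrite !inE.
by case: (op_sel x y) => -> /orP[->|->]; rewrite ?eqxx ?orbT.
Qed.

Lemma foldl_sel_extremal x s y : y \in x :: s -> e (foldl op x s) y.
Proof.
elim: s x y => [|z s IHs] x y /=; first by rewrite inE => /eqP->.
have [opx opz] := andP (e_op x z).
rewrite !inE => /or3P[/eqP->|/eqP->|ys].
- exact: e_trans (IHs _ _ (mem_head _ _)) opx.
- exact: e_trans (IHs _ _ (mem_head _ _)) opz.
- by apply: IHs; rewrite inE ys orbT.
Qed.

Lemma filter_foldl_sel_spec (a : pred T) s w y : y \in s -> a y ->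
  let m := if [seq x <- s | a x] is x :: t then foldl op x t else w in
  [/\ m \in s, a m & e m y].
Proof.
move=> ys ay /=; have : y \in [seq x <- s | a x] by rewrite mem_filter ay ys.
case E: [seq x <- s | a x] => [//|x t] _.
have := mem_foldl_sel x t; rewrite -E mem_filter => /andP[-> ->].
by split=> //; apply: foldl_sel_extremal; rewrite -E mem_filter ay ys.
Qed.

End FoldlExtremum.

Section OrderExtremum.
Context {d : Order.disp_t} {W : orderType d}.
Implicit Types (x y : W) (s : seq W).

Lemma min_sel x y : Order.min x y = x \/ Order.min x y = y.
Proof. by rewrite minEle; case: ifP; [left | right]. Qed.

Lemma max_sel x y : Order.max x y = x \/ Order.max x y = y.
Proof. by rewrite maxEle; case: ifP; [right | left]. Qed.

Lemma le_foldl_max x s y : y \in x :: s -> (y <= foldl Order.max x s)%O.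
Proof.
apply: (foldl_sel_extremal (e := fun u v => v <= u)%O) => [|u v z vu zv|u v].
- exact: lexx.
- exact: le_trans zv vu.
- by rewrite /= !le_max !lexx orbT.
Qed.

Lemma filter_foldl_min_spec (a : pred W) s w y : y \in s -> a y ->
  let m := if [seq x <- s | a x] is x :: t then foldl Order.min x t else w in
  [/\ m \in s, a m & (m <= y)%O].
Proof.
apply: filter_foldl_sel_spec => [||u v z uv vz|u v].
- exact: min_sel.
- exact: lexx.
- exact: le_trans uv vz.
- by rewrite !ge_min !lexx orbT.
Qed.

Lemma filter_foldl_max_spec (a : pred W) s w y : y \in s -> a y ->
  let m := if [seq x <- s | a x] is x :: t then foldl Order.max x t else w in
  [/\ m \in s, a m & (y <= m)%O].
Proof.
apply: (filter_foldl_sel_spec (e := fun u v => v <= u)%O) => [||u v z vu zv|u v].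
- exact: max_sel.
- exact: lexx.
- exact: le_trans zv vu.
- by rewrite /= !le_max !lexx orbT.
Qed.

End OrderExtremum.

Section HistoryProbability.
Context {R : realFieldType} {S A : finType}.
Variable P : S -> A -> S -> R.
Hypothesis HP : mdp_ok P.

Definition hcons T (x : S * A) (h : history T) : history T.+1 :=
  ([tuple of x :: h.1], h.2).

Lemma sum_history_succ T (F : history T.+1 -> R) :
  \sum_(h : history T.+1) F h =
  \sum_(s : S) \sum_(a : A) \sum_(h : history T) F (hcons (s, a) h).
Proof.
rewrite !pair_big /=; apply: reindex => /=.
exists (fun h : history T.+1 => (thead h.1, ([tuple of behead h.1], h.2))).
  by move=> [[s a] [t s']] _; congr (_, (_, _)); apply: val_inj.
by move=> [t s'] _; rewrite /hcons /= -surjective_pairing -tuple_eta.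
Qed.

Lemma hprob_eq0 s T (pol : policy) (h : history T) :
  hstate h 0 != s -> hprob P s pol h = 0.
Proof. by rewrite /hprob => /negbTE->; rewrite mul0r. Qed.

(* The tail of a history is generated by the policy that has already seen [x]. *)
Lemma hprob_hcons s T (pol : policy) x (h : history T) :
  hprob P s pol (hcons x h) =
  (x.1 == s)%:R * (pol [::] x.1 x.2 * P x.1 x.2 (hstate h 0))
  * hprob P (hstate h 0) (fun g => pol (x :: g)) h.
Proof.
rewrite /hprob big_ord_recl eqxx mul1r mulrA; congr (_ * _ * _).
by apply: eq_bigr => i _; rewrite /haction /= tnthS add0n.
Qed.

Lemma sum_hprob_initial T (pol : policy) (f : S -> R) :
  \sum_(h : history T) f (hstate h 0) * hprob P (hstate h 0) pol h =
  \sum_(s : S) f s * \sum_(h : history T) hprob P s pol h.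
Proof.
under [RHS]eq_bigr => s _ do rewrite mulr_sumr.
rewrite exchange_big /=; apply: eq_bigr => h _.
rewrite (bigD1 (hstate h 0)) //= big1 ?addr0 // => s.
by rewrite eq_sym => /(hprob_eq0 pol) ->; rewrite mulr0.
Qed.

Lemma hprob_sum T s (pol : policy) : policy_ok pol ->
  \sum_(h : history T) hprob P s pol h = 1.
Proof.
elim: T s pol => [|T IHT] s pol pol_ok.
  rewrite (bigD1 ([tuple], s)) //= big1 ?addr0 => [|[t s']].
    by rewrite /hprob big_ord0 /hstate /= eqxx mulr1.
  by rewrite tuple0 => s's; apply: hprob_eq0; apply: contra s's => /eqP <-.
have [pol_ge0 pol_sum1] := pol_ok.
rewrite sum_history_succ (bigD1 s) //= [X in _ + X]big1 ?addr0; last first.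
  move=> s' /negbTE s's; apply: big1 => a _; apply: big1 => h _.
  by rewrite hprob_hcons /= s's !mul0r.
rewrite -(pol_sum1 [::] s); apply: eq_bigr => a _.
under eq_bigr => h _ do rewrite hprob_hcons /= eqxx mul1r -mulrA.
rewrite -mulr_sumr sum_hprob_initial.
have pol_cons_ok : policy_ok (fun g => pol ((s, a) :: g)).
  by split=> *; [exact: pol_ge0 | exact: pol_sum1].
under eq_bigr => s' _ do rewrite (IHT s' _ pol_cons_ok) mulr1.
by rewrite (proj2 HP) mulr1.
Qed.

End HistoryProbability.

Section WealthDistribution.
Context {R : realFieldType} {S A : finType} {d : Order.disp_t} {W : orderType d}.
Variables (P : S -> A -> S -> R) (r : S -> A -> W) (op : W -> W -> W) (w0 : W)
  (s0 : S) (T : nat).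
Hypothesis HP : mdp_ok P.

Local Notation WT_T := (WT r op w0 s0 T).
Local Notation pmass_T := (pmass P r op w0 s0 T).
Local Notation cdf_T := (cdf P r op w0 s0 T).

Lemma hprob_ge0 (pol : policy) (h : history T) :
  policy_ok pol -> 0 <= hprob P s0 pol h.
Proof.
case=> pol_ge0 _; rewrite mulr_ge0 ?ler0n //; apply: prodr_ge0 => i _.
by rewrite mulr_ge0 //; case: HP.
Qed.

Lemma pmass_ge0 (pol : policy) w : policy_ok pol -> 0 <= pmass_T pol w.
Proof. by move=> pol_ok; apply: sumr_ge0 => h _; apply: hprob_ge0. Qed.

Lemma cdf_nondecreasing (pol : policy) : policy_ok pol ->
  {homo cdf_T pol : w w' / (w <= w')%O >-> w <= w'}.
Proof.
move=> pol_ok w w' ww'; rewrite /cdf [leRHS]big_mkcond [leLHS]big_mkcond.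
apply: ler_sum => x _; case: ifP => [xw | _]; first by rewrite (le_trans xw ww').
by case: ifP => // _; apply: pmass_ge0.
Qed.

Lemma sum_pmass (pol : policy) : policy_ok pol ->
  \sum_(w <- undup WT_T) pmass_T pol w = 1.
Proof.
move=> pol_ok; rewrite -(hprob_sum HP T s0 pol_ok) /pmass.
under eq_bigr => w _ do rewrite big_mkcond.
rewrite exchange_big /=; apply: eq_bigr => h _.
have [h_s0 | /(hprob_eq0 P pol)->] := eqVneq (hstate h 0) s0; last first.
  by apply: big1 => w _; case: ifP.
have h_WT : wealth r op w0 h \in undup WT_T.
  by rewrite mem_undup; apply: image_f; rewrite inE h_s0.
rewrite (bigD1_seq _ h_WT (undup_uniq _)) /= eqxx big1 ?addr0 // => w.
by rewrite eq_sym => /negbTE->.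
Qed.

Lemma cdf_eq1 (pol : policy) w : policy_ok pol ->
  (forall w', w' \in WT_T -> (w' <= w)%O) -> cdf_T pol w = 1.
Proof.
move=> pol_ok w_ub; rewrite -(sum_pmass pol_ok) /cdf big_seq_cond [RHS]big_seq.
by apply: eq_bigl => w'; apply/andb_idr; rewrite mem_undup; apply: w_ub.
Qed.

Lemma exists_cdf_ge (pol : policy) (tau : R) : policy_ok pol -> tau <= 1 ->
  exists2 w, w \in WT_T & tau <= cdf_T pol w.
Proof.
move=> pol_ok tau_le1; case WT_eq: WT_T => [|x s].
  by move: (sum_pmass pol_ok); rewrite WT_eq big_nil => /eqP; rewrite eq_sym oner_eq0.
exists (foldl Order.max x s); first exact: (mem_foldl_sel (@max_sel _ W)).
by rewrite cdf_eq1 // => w'; rewrite WT_eq; apply: le_foldl_max.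
Qed.

Lemma lower_quantile_spec (pol : policy) (tau : R) y :
  y \in WT_T -> tau <= cdf_T pol y ->
  let q := lower_quantile P r op w0 s0 T pol tau in
  [/\ q \in WT_T, tau <= cdf_T pol q & (q <= y)%O].
Proof. exact: filter_foldl_min_spec. Qed.

Lemma prec_spec w y : y \in WT_T -> (y < w)%O ->
  let p := prec r op w0 s0 T w in [/\ p \in WT_T, (p < w)%O & (y <= p)%O].
Proof. exact: filter_foldl_max_spec. Qed.

End WealthDistribution.

Theorem lemma3 (R : realFieldType) (S A : finType) (d : Order.disp_t)
    (W : orderType d)
    (P : S -> A -> S -> R) (r : S -> A -> W) (op : W -> W -> W) (w0 : W)
    (s0 : S) (T : nat)
    (HP : mdp_ok P) (Hw0 : forall w, op w0 w = w)
    (tau : R) (Htau : 0 < tau <= 1)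
    (qstar : W)
    (Hq_att : exists pol : policy, policy_ok pol /\
                lower_quantile P r op w0 s0 T pol tau = qstar)
    (Hq_max : forall pol : policy, policy_ok pol ->
                (lower_quantile P r op w0 s0 T pol tau <= qstar)%O)
    (pistar : policy) (Hpistar : policy_ok pistar)
    (Hmin : forall pol : policy, policy_ok pol ->
              cdf P r op w0 s0 T pistar (prec r op w0 s0 T qstar)
              <= cdf P r op w0 s0 T pol (prec r op w0 s0 T qstar)) :
  lower_quantile P r op w0 s0 T pistar tau = qstar.
Proof.
have tau_le1 : tau <= 1 by case/andP: Htau.
have [pol1 [pol1_ok q1_eq]] := Hq_att.
have [w w_WT w_cdf] := exists_cdf_ge r op w0 s0 T HP Hpistar tau_le1.
have [q_WT q_cdf _] := lower_quantile_spec w_WT w_cdf.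
apply/eqP; rewrite eq_le Hq_max //= leNgt; apply/negP => q_lt.
have [p_WT p_lt q_le_p] := prec_spec q_WT q_lt.
have p_cdf : tau <= cdf P r op w0 s0 T pol1 (prec r op w0 s0 T qstar).
  apply: le_trans q_cdf (le_trans _ (Hmin _ pol1_ok)).
  exact: cdf_nondecreasing r op w0 s0 T HP _ Hpistar _ _ q_le_p.
have [_ _] := lower_quantile_spec p_WT p_cdf.
by rewrite q1_eq leNgt p_lt.
Qed.
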